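(* Let $x,y\in V(D^+)$ with $y\prec x$. If $d_s(I_s(x))<d_s(y)$, then $I_s(x)\prec y$. If $d_s(I_t(y))>d_s(x)$, then $x\prec I_t(y)$.
   Context: $G=(V,E,w)$ is a simple, connected, undirected graph with positive edge lengths, $s,t\in V$, and $d(\cdot,\cdot)$ is the shortest path distance in $G$; $d_s(v)=d(s,v)$, $d_t(v)=d(v,t)$. $D$ is the union of all shortest $st$-paths of $G$, and $D^+$ is the directed acyclic graph obtained from $D$ by orienting every edge toward $t$. For $x,y\in V(D^+)$, $x\prec y$ means $x$ is an ancestor of $y$ in $D^+$ (a directed path of positive length from $x$ to $y$ exists), and $x\preceq y$ means $x\prec y$ or $x=y$. For $x\neq s$, $v\neq x$ is an $s$-dominator of $x$ if every directed path from $s$ to $x$ in $D^+$ contains $v$, and $I_s(x)$ is the $s$-dominator of $x$ closest to $x$ (every other $s$-dominator of $x$ is an $s$-dominator of $I_s(x)$). Symmetrically, for $x\neq t$, $v\neq x$ is a $t$-dominator of $x$ if every directed path from $x$ to $t$ in $D^+$ contains $v$, and $I_t(x)$ is the $t$-dominator of $x$ closest to $x$. *)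

From mathcomp Require Import all_boot all_order all_algebra.
Set Implicit Arguments. Unset Strict Implicit. Unset Printing Implicit Defensive.
Import Order.TTheory GRing.Theory Num.Theory.
Local Open Scope ring_scope.

Section Defs.
Variables (T : finType) (R : realFieldType).
Variables (e : rel T) (w : T -> T -> R) (d : T -> T -> R) (s t : T).

Fixpoint wlen (x : T) (p : seq T) : R :=
  match p with [::] => 0 | y :: p' => w x y + wlen y p' end.

Definition is_sp_dist : Prop :=
  forall u v,
    (exists p, path e u p /\ last u p = v /\ wlen u p = d u v) /\
    (forall p, path e u p -> last u p = v -> d u v <= wlen u p).

Definition shortest_st_path (p : seq T) : Prop :=
  path e s p /\ last s p = t /\ wlen s p = d s t.

(* Vertices of D (= V(D^+)). *)
Definition inD (x : T) : Prop :=
  exists p, shortest_st_path p /\ x \in s :: p.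

(* Arcs of D^+: edges of D, each oriented toward t (i.e. in the direction
   in which it is traversed by a shortest st-path). *)
Definition Darc (a b : T) : Prop :=
  exists p, shortest_st_path p /\
    exists p1 p2, s :: p = p1 ++ a :: b :: p2.

Fixpoint dwalk (x : T) (q : seq T) : Prop :=
  match q with [::] => True | y :: q' => Darc x y /\ dwalk y q' end.

Definition prec (x y : T) : Prop :=
  exists q, q <> [::] /\ dwalk x q /\ last x q = y.

Definition s_dom (v x : T) : Prop :=
  v <> x /\ forall q, dwalk s q -> last s q = x -> v \in s :: q.

Definition t_dom (v x : T) : Prop :=
  v <> x /\ forall q, dwalk x q -> last x q = t -> v \in x :: q.

(* v = I_s(x): the s-dominator of x closest to x. *)
Definition is_Is (x v : T) : Prop :=
  x <> s /\ s_dom v x /\ forall u, s_dom u x -> u <> v -> s_dom u v.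

(* v = I_t(x): the t-dominator of x closest to x. *)
Definition is_It (x v : T) : Prop :=
  x <> t /\ t_dom v x /\ forall u, t_dom u x -> u <> v -> t_dom u v.

End Defs.

From Pilot Require Import Defs.
From mathcomp Require Import all_boot all_order all_algebra.
From mathcomp Require Import lra.
Import Order.TTheory GRing.Theory Num.Theory.
Local Open Scope ring_scope.
Set Implicit Arguments. Unset Strict Implicit.

(* Prefixes of shortest st-paths are shortest paths, so d_s strictly increases
   along every arc of D^+, hence along every directed walk.  Concatenating a walk s ~> y, the walk y ~> x and
   a walk x ~> t, an s-dominator v of x lies on s ~> y ~> x and a t-dominator
   v of y lies on y ~> x ~> t.  The bounds on d_s(v) exclude the middle segment
   y ~> x, which leaves v ≺ y, resp. x ≺ v.  Only the dominator property of
   I_s(x) and I_t(y) is used. *)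

Section ShortestPathDag.
Variables (T : finType) (R : realFieldType).
Variables (e : rel T) (w : T -> T -> R) (d : T -> T -> R) (s t : T).

Local Notation dwalk := (Defs.dwalk e w d s t).
Local Notation prec := (Defs.prec e w d s t).

Lemma wlen_cat x p q : wlen w x (p ++ q) = wlen w x p + wlen w (last x p) q.
Proof. by elim: p x => [|y p IHp] x /=; rewrite ?add0r // IHp addrA. Qed.

Lemma dwalk_cat x p q : dwalk x (p ++ q) <-> dwalk x p /\ dwalk (last x p) q.
Proof.
elim: p x => [|y p IHp] x /=; first by split => // [[]].
by rewrite IHp; split => [[? []]|[[? ?] ?]].
Qed.

Lemma dwalk_prec x q v : dwalk x q -> v \in q -> prec x v.
Proof.
move=> + v_q; case/path.splitP: v_q => q1 q2 /dwalk_cat[walk_q1 _].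
by exists (rcons q1 v); rewrite last_rcons; split => //; case: q1 {walk_q1}.
Qed.

Lemma dwalk_prec_last x q v :
  dwalk x q -> v \in x :: q -> v <> last x q -> prec v (last x q).
Proof.
move=> + v_q; case/splitPl: v_q => q1 q2 <-{v} /dwalk_cat[_ walk_q2].
rewrite last_cat; case: q2 walk_q2 => [|u q2] walk_q2 neq //.
by exists (u :: q2).
Qed.

Hypothesis w_gt0 : forall u v, e u v -> 0 < w u v.
Hypothesis d_sp : is_sp_dist e w d.

Lemma shortest_path_prefix_dist p r r' :
  shortest_st_path e w d s t p -> p = r ++ r' -> d s (last s r) = wlen w s r.
Proof.
move=> [path_p [last_p wlen_p]] Ep; subst p.
move: path_p; rewrite cat_path => /andP[path_r path_r'].
rewrite last_cat in last_p; rewrite wlen_cat in wlen_p.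
have [[q [path_q [last_q wlen_q]]] d_le] := d_sp s (last s r).
have d_le_r := d_le r path_r erefl.
have := (d_sp s t).2 (q ++ r').
rewrite cat_path path_q last_q path_r' last_cat last_q wlen_cat last_q wlen_q.
move=> /(_ isT last_p); lra.
Qed.

Lemma Darc_dist_lt a b : Darc e w d s t a b -> d s a < d s b.
Proof.
move=> [p [sp_p [p1 [p2 Ep]]]].
have [r Er] : exists r, rcons p1 a = s :: r.
  by case: p1 Ep => [|c p1] [-> _]; [exists [::] | exists (rcons p1 a)].
have {}Ep : p = r ++ b :: p2.
  by move: Ep; rewrite -cat_rcons Er => -[].
have last_r : last s r = a by rewrite -[last s r]/(last s (s :: r)) -Er last_rcons.
have da := shortest_path_prefix_dist sp_p Ep.
have db := shortest_path_prefix_dist sp_p (etrans Ep (esym (cat_rcons b r p2))).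
have eab : e a b.
  by move: sp_p.1; rewrite Ep cat_path last_r => /andP[_ /= /andP[]].
rewrite last_r in da; rewrite last_rcons in db.
rewrite da db -cats1 wlen_cat last_r /= addr0 ltrDl; exact: w_gt0.
Qed.

Lemma dwalk_dist_lt x q v : dwalk x q -> v \in q -> d s x < d s v.
Proof.
elim: q x => [|y q IHq] x //= [arc_xy walk_q].
rewrite in_cons => /predU1P[-> | v_q]; first exact: Darc_dist_lt.
exact: lt_trans (Darc_dist_lt arc_xy) (IHq _ walk_q v_q).
Qed.

Lemma prec_dist_lt a b : prec a b -> d s a < d s b.
Proof.
move=> [q [q_neq0 [walk_q <-]]]; apply: dwalk_dist_lt walk_q _.
by case: q q_neq0 => //= c q _; exact: mem_last.
Qed.

Lemma dwalk_dist_le_last x q v : dwalk x q -> v \in x :: q -> d s v <= d s (last x q).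
Proof.
move=> walk_q v_q; have [-> // | neq] := eqVneq v (last x q).
by apply/ltW/prec_dist_lt/dwalk_prec_last => //; apply/eqP.
Qed.

Lemma shortest_path_dwalk p : shortest_st_path e w d s t p -> dwalk s p.
Proof.
move=> sp_p; suff walk_prefix r r' : p = r ++ r' -> dwalk s r.
  by apply: (walk_prefix p [::]); rewrite cats0.
elim/last_ind: r r' => [|r c IHr] r' Ep //.
rewrite -cats1; apply/dwalk_cat; split.
  by apply: (IHr (c :: r')); rewrite Ep cat_rcons.
split => //; exists p; split => //; exists (belast s r), r'.
by rewrite Ep -(cat_rcons (last s r)) -lastI cat_rcons.
Qed.

Lemma inD_dwalk x : inD e w d s t x ->
  exists q1 q2, [/\ dwalk s q1, last s q1 = x, dwalk x q2 & last x q2 = t].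
Proof.
move=> [p [+ x_p]]; case/splitPl: x_p => q1 q2 lastq1 sp_p.
have [walk_q1 walk_q2] := (dwalk_cat _ _ _).1 (shortest_path_dwalk sp_p).
have last_p := sp_p.2.1; rewrite last_cat lastq1 in last_p.
by exists q1, q2; rewrite lastq1 in walk_q2.
Qed.

Lemma s_dom_prec x y v : inD e w d s t y -> prec y x ->
  s_dom e w d s t v x -> d s v < d s y -> prec v y.
Proof.
move=> /inD_dwalk[q1 [_ [walk_q1 last_q1 _ _]]] [q [_ [walk_q last_q]]].
move=> [_ dom_v] lt_vy.
have : v \in s :: (q1 ++ q).
  apply: dom_v; last by rewrite last_cat last_q1.
  by apply/dwalk_cat; rewrite last_q1.
rewrite -cat_cons mem_cat => /orP[v_q1 | v_q].
  rewrite -last_q1; apply: dwalk_prec_last => //.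
  by rewrite last_q1 => eq_vy; rewrite eq_vy ltxx in lt_vy.
by have := dwalk_dist_lt walk_q v_q; rewrite ltNge (ltW lt_vy).
Qed.

Lemma t_dom_prec x y v : inD e w d s t x -> prec y x ->
  t_dom e w d s t v y -> d s x < d s v -> prec x v.
Proof.
move=> /inD_dwalk[_ [q2 [_ _ walk_q2 last_q2]]] [q [_ [walk_q last_q]]].
move=> [_ dom_v] lt_xv.
have : v \in y :: (q ++ q2).
  apply: dom_v; last by rewrite last_cat last_q.
  by apply/dwalk_cat; rewrite last_q.
rewrite -cat_cons mem_cat => /orP[v_q | v_q2]; last exact: dwalk_prec v_q2.
by have := dwalk_dist_le_last walk_q v_q; rewrite last_q leNgt lt_xv.
Qed.

End ShortestPathDag.

Theorem corollary1 (T : finType) (R : realFieldType)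
    (e : rel T) (w : T -> T -> R) (d : T -> T -> R) (s t : T) :
  symmetric e -> irreflexive e ->
  (forall u v, connect e u v) ->
  (forall u v, w u v = w v u) ->
  (forall u v, e u v -> 0 < w u v) ->
  is_sp_dist e w d ->
  forall x y : T, inD e w d s t x -> inD e w d s t y ->
    prec e w d s t y x ->
    (forall ix, is_Is e w d s t x ix ->
       d s ix < d s y -> prec e w d s t ix y) /\
    (forall iy, is_It e w d s t y iy ->
       d s iy > d s x -> prec e w d s t x iy).
Proof.
move=> _ _ _ _ w_gt0 d_sp x y x_D y_D y_prec_x; split.
  by move=> ix [_ [s_dom_ix _]]; exact: s_dom_prec y_D y_prec_x s_dom_ix.
by move=> iy [_ [t_dom_iy _]]; exact: t_dom_prec x_D y_prec_x t_dom_iy.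
Qed.
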